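(* Let $\gamma>\gamma^\star$ and define $\mathcal{K}_\gamma^+=\Phi(\mathcal{G}_\gamma^+)$ and $\mathcal{K}_\gamma^-=\Phi(\mathcal{G}_\gamma^-)$. If $\mathcal{K}_\gamma$ has two path-connected components $\mathcal{K}_\gamma^+$ and $\mathcal{K}_\gamma^-$, then for any $T\in\mathbb{R}^{n_x\times n_x}$ invertible with $\det T<0$, the mapping $\mathscr{T}_T$ restricts to a diffeomorphism from $\mathcal{K}_\gamma^+$ onto $\mathcal{K}_\gamma^-$.
   Context: Consider the continuous-time linear plant $\dot x=Ax+B_1w+B_2u$, $z=C_1x+D_{11}w+D_{12}u$, $y=C_2x+D_{21}w$, with $x\in\mathbb{R}^{n_x}$, $w\in\mathbb{R}^{n_w}$, $u\in\mathbb{R}^{n_u}$, $y\in\mathbb{R}^{n_y}$, $z\in\mathbb{R}^{n_z}$ and real matrices of compatible dimensions; assume $(A,B_2)$ stabilizable and $(C_2,A)$ detectable. A full-order controller $\dot\xi=A_K\xi+B_Ky$, $u=C_K\xi+D_Ky$, $\xi\in\mathbb{R}^{n_x}$, is identified with $K=\begin{bmatrix}D_K & C_K\\ B_K & A_K\end{bmatrix}$. Closed-loop matrices: $A_{cl}=\begin{bmatrix}A+B_2D_KC_2 & B_2C_K\\ B_KC_2 & A_K\end{bmatrix}$, $B_{cl}=\begin{bmatrix}B_1+B_2D_KD_{21}\\ B_KD_{21}\end{bmatrix}$, $C_{cl}=\begin{bmatrix}C_1+D_{12}D_KC_2 & D_{12}C_K\end{bmatrix}$, $D_{cl}=D_{11}+D_{12}D_KD_{21}$;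 $\mathcal{C}_{stab}$ is the set of $K$ with $A_{cl}$ Hurwitz; $\mathbf{T}_{zw}(s)=C_{cl}(sI-A_{cl})^{-1}B_{cl}+D_{cl}$; $\mathcal{K}_\gamma=\{K\in\mathcal{C}_{stab}:\|\mathbf{T}_{zw}\|_\infty<\gamma\}$; $\gamma^\star=\inf_{K\in\mathcal{C}_{stab}}\|\mathbf{T}_{zw}\|_\infty$. For invertible $T$, $\mathscr{T}_T(K)=\begin{bmatrix}D_K & C_KT^{-1}\\ TB_K & TA_KT^{-1}\end{bmatrix}$ (similarity transformation). For $X,Y\in\mathbb{S}^{n_x}$, $\hat A\in\mathbb{R}^{n_x\times n_x}$, $\hat B\in\mathbb{R}^{n_x\times n_y}$, $\hat C\in\mathbb{R}^{n_u\times n_x}$, $\hat D\in\mathbb{R}^{n_u\times n_y}$, let $M_\gamma$ be the symmetric $4\times4$ block matrix with $M_{11}=AX+XA^T+B_2\hat C+(B_2\hat C)^T$, $M_{12}=\hat A^T+A+B_2\hat DC_2$, $M_{13}=B_1+B_2\hat DD_{21}$, $M_{14}=(C_1X+D_{12}\hat C)^T$, $M_{22}=A^TY+YA+\hat BC_2+(\hat BC_2)^T$, $M_{23}=YB_1+\hat BD_{21}$, $M_{24}=(C_1+D_{12}\hat DC_2)^T$, $M_{33}=-\gamma I$, $M_{34}=(D_{11}+D_{12}\hat DD_{21})^T$, $M_{44}=-\gamma I$. $\mathcal{G}_\gamma$ is the set of $(X,Y,\hat A,\hat B,\hat C,\hat D,\Pi,\Xi)$ with $\begin{bmatrix}X&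 I\\ I& Y\end{bmatrix}\succ0$, $M_\gamma\prec0$, $\Pi,\Xi\in\mathbb{R}^{n_x\times n_x}$ and $\Xi\Pi=I-YX$; $\mathcal{G}_\gamma^{\pm}$ are the subsets with $\det\Pi>0$, resp. $\det\Pi<0$. $\Phi(X,Y,\hat A,\hat B,\hat C,\hat D,\Pi,\Xi)=\begin{bmatrix} I & 0\\ YB_2 & \Xi\end{bmatrix}^{-1}\begin{bmatrix}\hat D & \hat C\\ \hat B & \hat A-YAX\end{bmatrix}\begin{bmatrix} I & C_2X\\ 0 & \Pi\end{bmatrix}^{-1}$ (well defined on $\mathcal{G}_\gamma$, with $\Phi(\mathcal{G}_\gamma)=\mathcal{K}_\gamma$). *)

From HB Require Import structures.
From mathcomp Require Import all_boot all_order all_algebra.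
From mathcomp Require Import all_classical all_reals all_analysis.
From mathcomp Require complex.
Import complex.ComplexField.
Set Implicit Arguments. Unset Strict Implicit. Unset Printing Implicit Defensive.
Import Order.TTheory GRing.Theory Num.Theory.
Import numFieldNormedType.Exports.
Local Open Scope classical_set_scope.
Local Open Scope ring_scope.

Section Defs.
Variable R : realType.

Definition cmx m n (M : 'M[R]_(m, n)) : 'M[complex.complex R]_(m, n) :=
  map_mx (fun x => complex.Complex x 0) M.

Definition hurwitz n (M : 'M[R]_n) : Prop :=
  forall l : complex.complex R, root (char_poly (cmx M)) l -> complex.Re l < 0.

Definition symmetric n (M : 'M[R]_n) : Prop := M^T = M.
Definition posdef n (M : 'M[R]_n) : Prop :=
  symmetric M /\ forall v : 'cV[R]_n, v != 0 -> 0 < (v^T *m M *m v) 0 0.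
Definition negdef n (M : 'M[R]_n) : Prop := posdef (- M).

Definition cvnorm2 n (v : 'cV[complex.complex R]_n) : R :=
  \sum_(k < n) (complex.Re (v k 0) ^+ 2 + complex.Im (v k 0) ^+ 2).

Definition sigma_max m n (M : 'M[complex.complex R]_(m, n)) : R :=
  Num.sqrt (sup [set cvnorm2 (M *m v) | v in [set v : 'cV[complex.complex R]_n | cvnorm2 v = 1]]).

Record plant (nx nw nu ny nz : nat) := Plant {
  pA : 'M[R]_nx;
  pB1 : 'M[R]_(nx, nw);
  pB2 : 'M[R]_(nx, nu);
  pC1 : 'M[R]_(nz, nx);
  pD11 : 'M[R]_(nz, nw);
  pD12 : 'M[R]_(nz, nu);
  pC2 : 'M[R]_(ny, nx);
  pD21 : 'M[R]_(ny, nw) }.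

Definition stabilizable n m (A : 'M[R]_n) (B : 'M[R]_(n, m)) : Prop :=
  exists F : 'M[R]_(m, n), hurwitz (A + B *m F).
Definition detectable n p (C : 'M[R]_(p, n)) (A : 'M[R]_n) : Prop :=
  exists L : 'M[R]_(n, p), hurwitz (A + L *m C).

Variables nx nw nu ny nz : nat.
Variable P : plant nx nw nu ny nz.
Local Notation A := (pA P). Local Notation B1 := (pB1 P).
Local Notation B2 := (pB2 P). Local Notation C1 := (pC1 P).
Local Notation D11 := (pD11 P). Local Notation D12 := (pD12 P).
Local Notation C2 := (pC2 P). Local Notation D21 := (pD21 P).

Definition ctrl := 'M[R]_(nu + nx, ny + nx).
Definition DK (K : ctrl) : 'M[R]_(nu, ny) := ulsubmx K.
Definition CK (K : ctrl) : 'M[R]_(nu, nx) := ursubmx K.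
Definition BK (K : ctrl) : 'M[R]_(nx, ny) := dlsubmx K.
Definition AK (K : ctrl) : 'M[R]_(nx, nx) := drsubmx K.

Definition Acl (K : ctrl) : 'M[R]_(nx + nx) :=
  block_mx (A + B2 *m DK K *m C2) (B2 *m CK K) (BK K *m C2) (AK K).
Definition Bcl (K : ctrl) : 'M[R]_(nx + nx, nw) :=
  col_mx (B1 + B2 *m DK K *m D21) (BK K *m D21).
Definition Ccl (K : ctrl) : 'M[R]_(nz, nx + nx) :=
  row_mx (C1 + D12 *m DK K *m C2) (D12 *m CK K).
Definition Dcl (K : ctrl) : 'M[R]_(nz, nw) := D11 + D12 *m DK K *m D21.

Definition Cstab : set ctrl := [set K | hurwitz (Acl K)].

Definition Tzw (K : ctrl) (s : complex.complex R) : 'M[complex.complex R]_(nz, nw) :=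
  cmx (Ccl K) *m invmx (s%:M - cmx (Acl K)) *m cmx (Bcl K) + cmx (Dcl K).

Definition hinf_norm (K : ctrl) : R :=
  sup [set sigma_max (Tzw K (complex.Complex 0 w)) | w in [set: R]].

Definition Kgamma (g : R) : set ctrl := [set K | Cstab K /\ hinf_norm K < g].

Definition gamma_star : R := inf [set hinf_norm K | K in Cstab].

Definition simT (T : 'M[R]_nx) (K : ctrl) : ctrl :=
  block_mx (DK K) (CK K *m invmx T) (T *m BK K) (T *m AK K *m invmx T).

Definition Mgamma (g : R) (X Y Ah : 'M[R]_nx) (Bh : 'M[R]_(nx, ny))
    (Ch : 'M[R]_(nu, nx)) (Dh : 'M[R]_(nu, ny))
    : 'M[R]_((nx + nx) + (nw + nz)) :=
  let M11 := A *m X + X *m A^T + B2 *m Ch + (B2 *m Ch)^T in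
  let M12 := Ah^T + A + B2 *m Dh *m C2 in
  let M13 := B1 + B2 *m Dh *m D21 in
  let M14 := (C1 *m X + D12 *m Ch)^T in
  let M22 := A^T *m Y + Y *m A + Bh *m C2 + (Bh *m C2)^T in
  let M23 := Y *m B1 + Bh *m D21 in
  let M24 := (C1 + D12 *m Dh *m C2)^T in
  let M34 := (D11 + D12 *m Dh *m D21)^T in
  let Q := block_mx M13 M14 M23 M24 in
  block_mx (block_mx M11 M12 M12^T M22) Q Q^T
           (block_mx (- g%:M) M34 M34^T (- g%:M)).

Definition Ggamma (g : R) (X Y Ah : 'M[R]_nx) (Bh : 'M[R]_(nx, ny))
    (Ch : 'M[R]_(nu, nx)) (Dh : 'M[R]_(nu, ny)) (Pi Xi : 'M[R]_nx) : Prop :=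
  [/\ symmetric X, symmetric Y,
      posdef (block_mx X 1%:M 1%:M Y),
      negdef (Mgamma g X Y Ah Bh Ch Dh)
    & Xi *m Pi = 1%:M - Y *m X].

Definition Phi (X Y Ah : 'M[R]_nx) (Bh : 'M[R]_(nx, ny))
    (Ch : 'M[R]_(nu, nx)) (Dh : 'M[R]_(nu, ny)) (Pi Xi : 'M[R]_nx) : ctrl :=
  invmx (block_mx 1%:M 0 (Y *m B2) Xi)
  *m block_mx Dh Ch Bh (Ah - Y *m A *m X)
  *m invmx (block_mx 1%:M (C2 *m X) 0 Pi).

Definition Kplus (g : R) : set ctrl :=
  [set K | exists X Y Ah Bh Ch Dh Pi Xi,
     [/\ Ggamma g X Y Ah Bh Ch Dh Pi Xi, 0 < \det Pi
       & K = Phi X Y Ah Bh Ch Dh Pi Xi]].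
Definition Kminus (g : R) : set ctrl :=
  [set K | exists X Y Ah Bh Ch Dh Pi Xi,
     [/\ Ggamma g X Y Ah Bh Ch Dh Pi Xi, \det Pi < 0
       & K = Phi X Y Ah Bh Ch Dh Pi Xi]].

End Defs.

Section Topo.
Variable R : realType.

Definition path_joined (V : topologicalType) (S : set V) (x y : V) : Prop :=
  exists f : R -> V, [/\ {within [set` `[0%R, 1%R]], continuous f},
     f 0 = x, f 1 = y & forall t, [set` `[0%R, 1%R]] t -> S (f t)].

Definition path_component_of (V : topologicalType) (S C : set V) : Prop :=
  exists2 x, S x & C = [set y | path_joined S x y].

Fixpoint iter_dir (V W : normedModType R) (vs : seq V) (f : V -> W) : V -> W :=
  match vs with
  | [::] => f
  | v :: vs' => fun x => derive (iter_dir vs' f) x v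
  end.

Definition smooth_on (V W : normedModType R) (A : set V) (f : V -> W) : Prop :=
  forall vs : seq V,
    {within A, continuous (iter_dir vs f)} /\
    (forall v x, A x -> derivable (iter_dir vs f) x v).

Definition diffeo_onto (V W : normedModType R) (A : set V) (B : set W)
    (f : V -> W) : Prop :=
  exists g : W -> V,
    [/\ forall x, A x -> B (f x),
        forall y, B y -> A (g y),
        forall x, A x -> g (f x) = x,
        forall y, B y -> f (g y) = y
      & smooth_on A f /\ smooth_on B g].

End Topo.

From HB Require Import structures.
From mathcomp Require Import all_boot all_order all_algebra.
From mathcomp Require Import all_classical all_reals all_analysis.
From mathcomp Require complex.
Import complex.ComplexField.
Import Order.TTheory GRing.Theory Num.Theory.
Import numFieldNormedType.Exports.
Set Implicit Arguments. Unset Strict Implicit. Unset Printing Implicit Defensive.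
Local Open Scope classical_set_scope.
Local Open Scope ring_scope.

(* The factorization Xi Pi = I - Y X in G_gamma is only determined up to
   Xi Pi = (Xi T^-1) (T Pi). Replacing (Pi, Xi) by (T Pi, Xi T^-1) keeps the
   point in G_gamma, multiplies det Pi by det T, and changes Phi exactly by the
   similarity transformation with T. Hence for det T < 0 the linear map
   simT T sends K_gamma^+ into K_gamma^-, simT T^-1 sends it back, and both,
   being linear, are smooth. *)

Section DiagBlock.
Variable R : comUnitRingType.

Definition diag1_mx m n (T : 'M[R]_n) : 'M[R]_(m + n) := block_mx 1%:M 0 0 T.

Lemma diag1_mxM m n (S T : 'M[R]_n) :
  diag1_mx m S *m diag1_mx m T = diag1_mx m (S *m T).
Proof. by rewrite mulmx_block !(mulmx0, mul0mx, addr0, add0r, mulmx1). Qed.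

Lemma diag1_mx1 m n : diag1_mx m (1%:M : 'M[R]_n) = 1%:M.
Proof. by rewrite /diag1_mx -scalar_mx_block. Qed.

Lemma diag1_mxV m n (T : 'M[R]_n) : T \in unitmx ->
  diag1_mx m (invmx T) *m diag1_mx m T = 1%:M.
Proof. by move=> uT; rewrite diag1_mxM mulVmx // diag1_mx1. Qed.

Lemma diag1_mx_unit m n (T : 'M[R]_n) :
  (diag1_mx m T \in unitmx) = (T \in unitmx).
Proof. by rewrite !unitmxE det_ublock det1 mul1r. Qed.

Lemma invmx_diag1_mx m n (T : 'M[R]_n) : T \in unitmx ->
  invmx (diag1_mx m T) = diag1_mx m (invmx T).
Proof. by move=> uT; rewrite invmx_block_diag ?diag1_mx_unit // invmx1. Qed.

Lemma invmxM n (S T : 'M[R]_n) : S \in unitmx -> T \in unitmx ->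
  invmx (S *m T) = invmx T *m invmx S.
Proof.
move=> uS uT.
have VST : invmx T *m invmx S *m (S *m T) = 1%:M.
  by rewrite mulmxA mulmxKV // mulVmx.
by rewrite -[LHS]mul1mx -VST mulmxK // unitmx_mul uS.
Qed.

End DiagBlock.

Section Similarity.
Variables (R : realType) (nx nu ny : nat).
Implicit Types (T : 'M[R]_nx) (K : ctrl R nx nu ny).

Lemma simT_diag1 T K : simT T K = diag1_mx nu T *m K *m diag1_mx ny (invmx T).
Proof.
rewrite -[K in RHS]submxK /diag1_mx !mulmx_block.
by rewrite !(mulmx0, mul0mx, add0r, addr0, mul1mx, mulmx1).
Qed.

Lemma simTK T K : T \in unitmx -> simT (invmx T) (simT T K) = K.
Proof.
move=> uT; rewrite !simT_diag1 invmxK !mulmxA diag1_mxV // mul1mx.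
by rewrite -mulmxA diag1_mxV // mulmx1.
Qed.

Lemma simTVK T K : T \in unitmx -> simT T (simT (invmx T) K) = K.
Proof. by move=> uT; rewrite -{1}(invmxK T) simTK ?unitmx_inv. Qed.

Lemma simT_is_linear T : linear (@simT R nx nu ny T).
Proof.
by move=> a K L; rewrite !simT_diag1 mulmxDr mulmxDl -scalemxAr -scalemxAl.
Qed.

End Similarity.

Section LinearSmooth.
Variable R : realType.

Lemma continuous_sum (T : topologicalType) (V : normedModType R) (I : Type)
    (r : seq I) (F : I -> T -> V) :
  (forall i, continuous (F i)) -> continuous (fun x => \sum_(i <- r) F i x).
Proof.
move=> Fc; elim: r => [|i r IHr].
  by under eq_fun do rewrite big_nil; exact: cst_continuous.
under eq_fun do rewrite big_cons.
by move=> x; apply: continuousD; [exact: Fc | exact: IHr].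
Qed.

Lemma linear_mx_continuous m n p q
    (f : {linear 'M[R]_(m, n) -> 'M[R]_(p, q)}) :
  continuous f.
Proof.
have -> : f = (fun M => \sum_i \sum_j M i j *: f (delta_mx i j)) :> (_ -> _).
  apply/funext => M; rewrite {1}(matrix_sum_delta M) !linear_sum.
  apply: eq_bigr => i _; rewrite linear_sum.
  by apply: eq_bigr => j _; rewrite linearZ.
apply: continuous_sum => i; apply: continuous_sum => j M.
exact/continuousZr_tmp/coord_continuous.
Qed.

Lemma smooth_on_linear (V W : normedModType R) (A : set V)
    (f : {linear V -> W}) :
  continuous f -> smooth_on A f.
Proof.
move=> fc.
have derive_f x v : 'D_v f x = f v.
  by rewrite (deriveE _ (linear_differentiable x fc)) diff_lin.
have iter_dir_f vs : iter_dir vs f = f \/ exists w, iter_dir vs f = cst w.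
  elim: vs => [|v vs [IH|[w IH]]] /=; first by left.
    by right; exists (f v); rewrite IH; apply/funext => x; exact: derive_f.
  by right; exists 0; rewrite IH; apply/funext => x; exact: derive_cst.
move=> vs; case: (iter_dir_f vs) => [->|[w ->]]; split.
- exact: continuous_subspaceT.
- by move=> v x _; exact: diff_derivable (linear_differentiable x fc).
- exact/continuous_subspaceT/cst_continuous.
- by move=> v x _; exact: derivable_cst.
Qed.

Lemma smooth_on_simT nx nu ny (T : 'M[R]_nx) (A : set (ctrl R nx nu ny)) :
  smooth_on A (simT T).
Proof.
pose simTL : {linear ctrl R nx nu ny -> ctrl R nx nu ny} :=
  HB.pack (simT T)
    (GRing.isLinear.Build _ _ _ _ _ (@simT_is_linear R nx nu ny T)).
exact/(@smooth_on_linear _ _ _ simTL)/linear_mx_continuous.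
Qed.

End LinearSmooth.

Lemma posdef_block1_unitmx (R : realType) n (X Y : 'M[R]_n) :
  posdef (block_mx X 1%:M 1%:M Y) -> 1%:M - Y *m X \in unitmx.
Proof.
case=> _ pd; rewrite unitmxE unitfE; apply/negP => /det0P [v v0 vYX].
have vYXE : v *m Y *m X = v.
  by move: vYX; rewrite mulmxBr mulmx1 mulmxA => /eqP; rewrite subr_eq0 => /eqP.
(* [vY, -v] annihilates the block matrix from the left. *)
pose w : 'cV[R]_(n + n) := col_mx (v *m Y)^T (- v^T).
have w0 : w != 0.
  apply: contra v0 => /eqP; rewrite /w -col_mx0 => /eq_col_mx [_ /eqP].
  by rewrite oppr_eq0 => /eqP/(congr1 trmx); rewrite trmxK trmx0 => ->.
have := pd w w0.
rewrite /w tr_col_mx !trmxK linearN /= mul_row_block !mulmx1 !mulNmx vYXE trmxK.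
by rewrite !subrr row_mx0 mul0mx mxE ltxx.
Qed.

Section Rescaling.
Variables (R : realType) (nx nw nu ny nz : nat) (P : plant R nx nw nu ny nz).
Variable g : R.
Variables (X Y Ah : 'M[R]_nx) (Bh : 'M[R]_(nx, ny)).
Variables (Ch : 'M[R]_(nu, nx)) (Dh : 'M[R]_(nu, ny)).
Implicit Types (T Pi Xi : 'M[R]_nx).

Lemma Ggamma_unitmx Pi Xi : Ggamma P g X Y Ah Bh Ch Dh Pi Xi ->
  Pi \in unitmx /\ Xi \in unitmx.
Proof.
case=> _ _ /posdef_block1_unitmx + _ XiPi.
by rewrite -XiPi unitmx_mul => /andP [].
Qed.

Lemma Ggamma_rescale T Pi Xi : T \in unitmx ->
  Ggamma P g X Y Ah Bh Ch Dh Pi Xi ->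
  Ggamma P g X Y Ah Bh Ch Dh (T *m Pi) (Xi *m invmx T).
Proof.
move=> uT [sX sY pd nd XiPi]; split => //.
by rewrite mulmxA mulmxKV.
Qed.

Lemma Phi_rescale T Pi Xi : T \in unitmx -> Pi \in unitmx -> Xi \in unitmx ->
  Phi P X Y Ah Bh Ch Dh (T *m Pi) (Xi *m invmx T)
  = simT T (Phi P X Y Ah Bh Ch Dh Pi Xi).
Proof.
move=> uT uPi uXi; rewrite simT_diag1 /Phi.
have -> : block_mx 1%:M 0 (Y *m pB2 P) (Xi *m invmx T)
        = block_mx 1%:M 0 (Y *m pB2 P) Xi *m diag1_mx nu (invmx T).
  by rewrite mulmx_block !(mulmx0, mul0mx, add0r, addr0, mulmx1).
have -> : block_mx 1%:M (pC2 P *m X) 0 (T *m Pi)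
        = diag1_mx ny T *m block_mx 1%:M (pC2 P *m X) 0 Pi.
  by rewrite mulmx_block !(mulmx0, mul0mx, add0r, addr0, mul1mx).
have uL : block_mx 1%:M 0 (Y *m pB2 P) Xi \in unitmx.
  by rewrite unitmxE det_lblock det1 mul1r -unitmxE.
have uR : block_mx 1%:M (pC2 P *m X) 0 Pi \in unitmx.
  by rewrite unitmxE det_ublock det1 mul1r -unitmxE.
rewrite !invmxM ?diag1_mx_unit ?unitmx_inv // !invmx_diag1_mx ?unitmx_inv //.
by rewrite invmxK !mulmxA.
Qed.

End Rescaling.

Section SimTSwapsComponents.
Variables (R : realType) (nx nw nu ny nz : nat) (P : plant R nx nw nu ny nz).
Variables (g : R) (T : 'M[R]_nx).
Hypotheses (uT : T \in unitmx) (detT_lt0 : \det T < 0).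

Lemma simT_Kplus K : Kplus P g K -> Kminus P g (simT T K).
Proof.
move=> [X [Y [Ah [Bh [Ch [Dh [Pi [Xi [G detPi ->]]]]]]]]].
have [uPi uXi] := Ggamma_unitmx G.
exists X, Y, Ah, Bh, Ch, Dh, (T *m Pi), (Xi *m invmx T); split.
- exact: Ggamma_rescale.
- by rewrite det_mulmx pmulr_llt0.
- by rewrite Phi_rescale.
Qed.

Lemma simT_Kminus K : Kminus P g K -> Kplus P g (simT T K).
Proof.
move=> [X [Y [Ah [Bh [Ch [Dh [Pi [Xi [G detPi ->]]]]]]]]].
have [uPi uXi] := Ggamma_unitmx G.
exists X, Y, Ah, Bh, Ch, Dh, (T *m Pi), (Xi *m invmx T); split.
- exact: Ggamma_rescale.
- by rewrite det_mulmx nmulr_lgt0.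
- by rewrite Phi_rescale.
Qed.

End SimTSwapsComponents.

Theorem theorem2 (R : realType) (nx nw nu ny nz : nat)
    (P : plant R nx nw nu ny nz) (g : R) :
  stabilizable (pA P) (pB2 P) ->
  detectable (pC2 P) (pA P) ->
  gamma_star P < g ->
  (* the path-connected components of K_gamma are exactly K^+ and K^-,
     and these are two distinct sets *)
  (forall C, path_component_of R (Kgamma P g) C <->
             C = Kplus P g \/ C = Kminus P g) ->
  Kplus P g <> Kminus P g ->
  forall T : 'M[R]_nx, T \in unitmx -> \det T < 0 ->
    diffeo_onto (Kplus P g) (Kminus P g) (simT T).
Proof.
move=> _ _ _ _ _ T uT detT_lt0.
have uTV : invmx T \in unitmx by rewrite unitmx_inv.
have detTV_lt0 : \det (invmx T) < 0 by rewrite det_inv invr_lt0.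
exists (simT (invmx T)); split.
- exact: simT_Kplus.
- exact: simT_Kminus.
- by move=> K _; rewrite simTK.
- by move=> K _; rewrite simTVK.
- by split; apply: smooth_on_simT.
Qed.
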